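(* Let $M\in\mathbb{R}^{N\times N}$ and let $\{1,\dots,N\}=\mathcal S\cup\mathcal S'$ be a partition into disjoint nonempty sets, with block decomposition $M=\begin{bmatrix} M_{\mathcal S} & M_{\mathcal S\mathcal S'}\\ M_{\mathcal S'\mathcal S} & M_{\mathcal S'}\end{bmatrix}$. Then for all integers $k\ge 1$, \[ \big\|[M^k]_{\mathcal S\mathcal S'}\big\|\le k\,\|M\|^{k-1}\,\|M_{\mathcal S\mathcal S'}\|. \]
   Context: $\|\cdot\|$ is the spectral norm; $[X]_{\mathcal S\mathcal S'}$ denotes the submatrix of $X$ with rows indexed by $\mathcal S$ and columns indexed by $\mathcal S'$. *)

From HB Require Import structures.
From mathcomp Require Import all_boot all_order all_algebra.
From mathcomp Require Import boolp classical_sets reals.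
Set Implicit Arguments. Unset Strict Implicit. Unset Printing Implicit Defensive.
Import Order.TTheory GRing.Theory Num.Theory.
Local Open Scope ring_scope.

Definition vnorm (R : realType) (n : nat) (v : 'cV[R]_n) : R :=
  Num.sqrt (\sum_(i < n) v i 0 ^+ 2).

Definition specnorm (R : realType) (m n : nat) (A : 'M[R]_(m, n)) : R :=
  reals.sup [set vnorm (A *m x) | x in [set x : 'cV[R]_n | vnorm x <= 1]]%classic.

(* [X]_{S S'} : rows indexed by S, columns by S' (in increasing order) *)
Definition subblock (R : Type) (N : nat) (S S' : {set 'I_N}) (X : 'M[R]_N)
  : 'M[R]_(#|S|, #|S'|) :=
  \matrix_(i < #|S|, j < #|S'|) X (enum_val i) (enum_val j).

From HB Require Import structures.
From mathcomp Require Import all_boot all_order all_algebra.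
From mathcomp Require Import reals.
From mathcomp Require Import ring lra.
From mathcomp Require classical_sets.
Set Implicit Arguments. Unset Strict Implicit. Unset Printing Implicit Defensive.
Import Order.TTheory GRing.Theory Num.Theory.
Local Open Scope ring_scope.

(* Splitting the middle index of [M^(k+1) = M^k M] according to the partition
   gives the block recurrence [M^(k+1)]_SS' = [M^k]_SS M_SS' + [M^k]_SS' M_S'S'.
   Restricting a matrix to a block of coordinates does not increase its spectral
   norm, so by induction each step adds at most ||M||^k ||M_SS'|| to the bound. *)

Lemma sumr_sqr_ge0 (R : realDomainType) (I : finType) (F : I -> R) :
  0 <= \sum_i F i ^+ 2.
Proof. by apply: sumr_ge0 => i _; exact: sqr_ge0. Qed.

Lemma sumr_CauchySchwarz (R : realDomainType) (I : finType) (a b : I -> R) :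
  (\sum_i a i * b i) ^+ 2 <= (\sum_i a i ^+ 2) * (\sum_i b i ^+ 2).
Proof.
have lagrange : \sum_i \sum_j (a i * b j - a j * b i) ^+ 2
    = (\sum_i a i ^+ 2) * (\sum_j b j ^+ 2) + (\sum_i b i ^+ 2) * (\sum_j a j ^+ 2)
      - 2 * ((\sum_i a i * b i) * (\sum_j a j * b j)).
  rewrite !mulr_suml mulr_sumr -big_split -sumrB; apply: eq_bigr => i _ /=.
  rewrite !mulr_sumr -big_split -sumrB; apply: eq_bigr => j _ /=; ring.
have : 0 <= \sum_i \sum_j (a i * b j - a j * b i) ^+ 2.
  by apply: sumr_ge0 => i _; exact: sumr_sqr_ge0.
rewrite lagrange; lra.
Qed.

Section EuclideanNorm.
Variables (R : realType) (n : nat).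
Implicit Types x y : 'cV[R]_n.

Lemma vnorm_ge0 x : 0 <= vnorm x.
Proof. exact: sqrtr_ge0. Qed.

Lemma vnorm_sqr x : vnorm x ^+ 2 = \sum_i x i 0 ^+ 2.
Proof. by rewrite sqr_sqrtr ?sumr_sqr_ge0. Qed.

Lemma vnormE x : vnorm x = Num.sqrt ((x^T *m x) 0 0).
Proof.
by rewrite mxE; congr Num.sqrt; apply: eq_bigr => i _; rewrite mxE expr2.
Qed.

Lemma vnorm0 : vnorm (0 : 'cV[R]_n) = 0.
Proof. by rewrite /vnorm big1 ?sqrtr0 // => i _; rewrite mxE expr0n. Qed.

Lemma vnormZ (a : R) x : vnorm (a *: x) = `|a| * vnorm x.
Proof.
rewrite /vnorm -sqrtr_sqr -sqrtrM ?sqr_ge0 // mulr_sumr.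
by congr Num.sqrt; apply: eq_bigr => i _; rewrite mxE exprMn.
Qed.

Lemma dot_le_vnorm x y : \sum_i x i 0 * y i 0 <= vnorm x * vnorm y.
Proof.
have := sumr_CauchySchwarz (fun i => x i 0) (fun i => y i 0).
rewrite -!vnorm_sqr -exprMn => CS.
have := mulr_ge0 (vnorm_ge0 x) (vnorm_ge0 y); nra.
Qed.

Lemma vnormD x y : vnorm (x + y) <= vnorm x + vnorm y.
Proof.
rewrite -[leRHS]ger0_norm ?addr_ge0 ?vnorm_ge0 // -sqrtr_sqr ler_sqrt ?sqr_ge0 //.
have -> : \sum_i (x + y) i 0 ^+ 2
    = vnorm x ^+ 2 + vnorm y ^+ 2 + 2 * \sum_i x i 0 * y i 0.
  rewrite !vnorm_sqr mulr_sumr -!big_split; apply: eq_bigr => i _ /=.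
  by rewrite mxE; ring.
have := dot_le_vnorm x y; nra.
Qed.

Lemma vnorm_mulmx_le_frobenius m (A : 'M[R]_(m, n)) x :
  vnorm (A *m x) <= Num.sqrt (\sum_i \sum_j A i j ^+ 2) * vnorm x.
Proof.
have frob_ge0 : 0 <= \sum_i \sum_j A i j ^+ 2.
  by apply: sumr_ge0 => i _; exact: sumr_sqr_ge0.
rewrite /vnorm -sqrtrM // ler_sqrt ?mulr_ge0 ?sumr_sqr_ge0 // mulr_suml.
apply: ler_sum => i _; rewrite mxE.
exact: (sumr_CauchySchwarz (fun j => A i j) (fun j => x j 0)).
Qed.

End EuclideanNorm.

Section SpectralNorm.
Import classical_sets.
Variable R : realType.

Lemma specnorm_has_ubound m n (A : 'M[R]_(m, n)) :
  has_ubound [set vnorm (A *m x) | x in [set x : 'cV[R]_n | vnorm x <= 1]]%classic.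
Proof.
exists (Num.sqrt (\sum_i \sum_j A i j ^+ 2)) => _ [x x_le1 <-].
apply: le_trans (vnorm_mulmx_le_frobenius A x) _.
by rewrite ler_piMr ?sqrtr_ge0.
Qed.

Lemma vnorm_mulmx_le_specnorm m n (A : 'M[R]_(m, n)) x :
  vnorm x <= 1 -> vnorm (A *m x) <= specnorm A.
Proof. by move=> x_le1; apply: (ub_le_sup (specnorm_has_ubound A)); exists x. Qed.

Lemma specnorm_ge0 m n (A : 'M[R]_(m, n)) : 0 <= specnorm A.
Proof.
by have := @vnorm_mulmx_le_specnorm _ _ A 0; rewrite mulmx0 !vnorm0; apply.
Qed.

Lemma vnorm_mulmx_le m n (A : 'M[R]_(m, n)) x :
  vnorm (A *m x) <= specnorm A * vnorm x.
Proof.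
have [x0 | x_neq0] := eqVneq (vnorm x) 0.
  by have := vnorm_mulmx_le_frobenius A x; rewrite x0 !mulr0.
have x_gt0 : 0 < vnorm x by rewrite lt_def x_neq0 vnorm_ge0.
have := @vnorm_mulmx_le_specnorm _ _ A ((vnorm x)^-1 *: x).
rewrite -scalemxAr !vnormZ ger0_norm ?invr_ge0 ?vnorm_ge0 // mulVf // lexx.
by move=> /(_ isT); rewrite mulrC ler_pdivrMr.
Qed.

Lemma specnorm_le m n (A : 'M[R]_(m, n)) c :
  0 <= c -> (forall x, vnorm (A *m x) <= c * vnorm x) -> specnorm A <= c.
Proof.
move=> c_ge0 Ax_le; apply: ge_sup.
  by exists (vnorm (A *m 0)), 0 => //=; rewrite vnorm0.
by move=> _ [x x_le1 <-]; apply: le_trans (Ax_le x) _; rewrite ler_piMr.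
Qed.

Lemma specnormM m n p (A : 'M[R]_(m, n)) (B : 'M[R]_(n, p)) :
  specnorm (A *m B) <= specnorm A * specnorm B.
Proof.
apply: specnorm_le => [|x]; first by rewrite mulr_ge0 ?specnorm_ge0.
rewrite -mulmxA -mulrA; apply: le_trans (vnorm_mulmx_le _ _) _.
by rewrite ler_wpM2l ?specnorm_ge0 ?vnorm_mulmx_le.
Qed.

Lemma specnormD m n (A B : 'M[R]_(m, n)) :
  specnorm (A + B) <= specnorm A + specnorm B.
Proof.
apply: specnorm_le => [|x]; first by rewrite addr_ge0 ?specnorm_ge0.
rewrite mulmxDl mulrDl; apply: le_trans (vnormD _ _) _.
by rewrite lerD ?vnorm_mulmx_le.
Qed.

Lemma specnormX n (A : 'M[R]_n) k : specnorm (A ^+ k) <= specnorm A ^+ k.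
Proof.
elim: k => [|k IH].
  by rewrite !expr0; apply: specnorm_le => // x; rewrite -idmxE mul1mx mul1r.
rewrite !exprSr; apply: le_trans (specnormM _ _) _.
by rewrite ler_wpM2r ?specnorm_ge0.
Qed.

End SpectralNorm.

Section CoordinateBlocks.
Variables (R : realType) (N : nat).
Implicit Types (S T : {set 'I_N}) (X Y : 'M[R]_N).

Definition selmx T : 'M[R]_(N, #|T|) := colsub enum_val 1%:M.

Lemma subblockE S T X : subblock S T X = (selmx S)^T *m X *m selmx T.
Proof.
by rewrite trmx_mxsub trmx1 mul_rowsub_mx mul1mx mulmx_colsub mulmx1 -mxsub_comp.
Qed.

Lemma trmx_selmxK T : (selmx T)^T *m selmx T = 1%:M.
Proof.
apply/matrixP => i j.
by rewrite trmx_mxsub trmx1 -mxsub_mul mul1mx !mxE (inj_eq enum_val_inj).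
Qed.

Lemma vnorm_selmx T (x : 'cV[R]_#|T|) : vnorm (selmx T *m x) = vnorm x.
Proof.
by rewrite !vnormE trmx_mul -mulmxA (mulmxA (selmx T)^T) trmx_selmxK mul1mx.
Qed.

Lemma vnorm_trmx_selmx_le T (y : 'cV[R]_N) : vnorm ((selmx T)^T *m y) <= vnorm y.
Proof.
rewrite /vnorm ler_sqrt ?sumr_sqr_ge0 // trmx_mxsub trmx1 mul_rowsub_mx mul1mx.
under eq_bigr do rewrite mxE.
rewrite -(big_enum_val (fun j => y j 0 ^+ 2)) /= [leRHS](bigID (mem T)) /=.
by rewrite lerDl sumr_ge0 // => j _; exact: sqr_ge0.
Qed.

Lemma specnorm_subblock_le S T X : specnorm (subblock S T X) <= specnorm X.
Proof.
have PS : specnorm (selmx S)^T <= 1.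
  by apply: specnorm_le => // y; rewrite mul1r vnorm_trmx_selmx_le.
have PT : specnorm (selmx T) <= 1.
  by apply: specnorm_le => // x; rewrite vnorm_selmx mul1r.
rewrite subblockE; apply: le_trans (specnormM _ _) _.
rewrite -[leRHS]mulr1 ler_pM ?specnorm_ge0 //.
apply: le_trans (specnormM _ _) _.
by rewrite -[leRHS]mul1r ler_pM ?specnorm_ge0.
Qed.

Lemma subblockM S T U X Y :
  subblock S U (X *m Y) =
    subblock S T X *m subblock T U Y + subblock S (~: T) X *m subblock (~: T) U Y.
Proof.
apply/matrixP => i j; rewrite !mxE (bigID (mem T)) /=.
congr (_ + _); under [RHS]eq_bigr do rewrite !mxE.
  by rewrite -(big_enum_val (fun l => X _ l * Y l _)).
rewrite -(big_enum_val (fun l => X _ l * Y l _)).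
by apply: eq_bigl => l; rewrite in_setC.
Qed.

End CoordinateBlocks.

Lemma specnorm_subblock_expS (R : realType) N (M : 'M[R]_N) (S : {set 'I_N}) k :
  specnorm (subblock S (~: S) (M ^+ k.+1))
    <= k.+1%:R * specnorm M ^+ k * specnorm (subblock S (~: S) M).
Proof.
set m := specnorm M; set c := specnorm (subblock S (~: S) M).
have [m_ge0 c_ge0] : 0 <= m /\ 0 <= c by split; apply: specnorm_ge0.
elim: k => [|k IH]; first by rewrite expr1 expr0 mulr1 mul1r.
rewrite exprSr (subblockM _ S); apply: le_trans (specnormD _ _) _.
have diag_term : specnorm (subblock S S (M ^+ k.+1) *m subblock S (~: S) M)
    <= m ^+ k.+1 * c.
  apply: le_trans (specnormM _ _) (ler_wpM2r c_ge0 _).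
  exact: le_trans (specnorm_subblock_le _ _ _) (specnormX _ _).
have offdiag_term :
    specnorm (subblock S (~: S) (M ^+ k.+1) *m subblock (~: S) (~: S) M)
    <= k.+1%:R * m ^+ k * c * m.
  apply: le_trans (specnormM _ _) _.
  by rewrite ler_pM ?specnorm_ge0 ?specnorm_subblock_le.
apply: le_trans (lerD diag_term offdiag_term) _.
by rewrite -natr1 exprS; lra.
Qed.

Theorem lemma3 (R : realType) (N : nat) (M : 'M[R]_N) (S : {set 'I_N})
  (hS : S != set0) (hS' : ~: S != set0) (k : nat) (hk : (1 <= k)%N) :
  specnorm (subblock S (~: S) (M ^+ k))
    <= k%:R * specnorm M ^+ k.-1 * specnorm (subblock S (~: S) M).
Proof. by case: k hk => // k _; exact: specnorm_subblock_expS. Qed.
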